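(* For every $k\ge2$, $n\ge0$ and nonnegative integers $m_1,\dots,m_k$, $$\mathcal D_k(m_1,\dots,m_k;n)=\sum_{t_1,\dots,t_{k-1}\ge0}\mathcal D^{ss}_k(m_1+2t_1,\dots,m_{k-1}+2t_{k-1},m_k;n).$$
   Context: A partition is a finite nonincreasing sequence $\lambda=(\lambda_1,\dots,\lambda_r)$ of positive integers (possibly empty); $l(\lambda)=r$, $|\lambda|=\sum\lambda_i$, $\lambda_1$ the largest part. Let $k\ge1$. A $k$-marked Durfee symbol of $n$ is an array $\eta=\begin{pmatrix}\alpha^k,&\dots,&\alpha^1\\ \beta^k,&\dots,&\beta^1\end{pmatrix}_D$ consisting of an integer $D\ge0$ and $2k$ partitions $\alpha^i,\beta^i$ with $\sum_{i=1}^k(|\alpha^i|+|\beta^i|)+D^2=n$, such that: (1) $\alpha^i$ is nonempty for $1\le i<k$; (2) for $1\le i<k$ every part of $\beta^i$ is $\le\alpha^i_1$, and for $2\le i\le k$ every part of $\alpha^i$ and every part of $\beta^i$ is $\ge\alpha^{i-1}_1$; (3) all parts of $\alpha^k$ and $\beta^k$ are $\le D$. The pair $(\alpha^i,\beta^i)$ is the $i$th vector. The $i$th rank is $\rho_i(\eta)=l(\alpha^i)-l(\beta^i)-1$ for $1\le i<k$ and $\rho_k(\eta)=l(\alpha^k)-l(\beta^k)$. $\mathcal D_k(m_1,\dots,m_k;n)$ is the number of $k$-marked Durfee symbols of $n$ with $\rho_i=m_i$ for all $i$. A pair of partitions $(\alpha,\beta)$ is strict shifted if $l(\alpha)>l(\beta)$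 and $\alpha_{i+1}>\beta_i$ for $1\le i\le l(\beta)$. A $k$-marked Durfee symbol is strict shifted if each vector $(\alpha^i,\beta^i)$, $1\le i\le k-1$, is strict shifted; $\mathcal D^{ss}_k(m_1,\dots,m_k;n)$ is the number of $k$-marked strict shifted Durfee symbols of $n$ with $i$th rank $m_i$ for all $i$. *)

From mathcomp Require Import all_boot all_order all_algebra.
Set Implicit Arguments. Unset Strict Implicit. Unset Printing Implicit Defensive.
Import GRing.Theory Num.Theory.

Definition is_partition (l : seq nat) : bool :=
  sorted geq l && all (fun x => 0 < x) l.

(* A k-marked Durfee symbol is represented as a pair (D, v) where
   v = [:: (alpha^1, beta^1); ...; (alpha^k, beta^k)]  (list position i-1
   holds the i-th vector). *)
Definition symbol := (nat * seq (seq nat * seq nat))%type.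

Definition alphai (s : symbol) (i : nat) : seq nat := (nth ([::], [::]) s.2 i).1.
Definition betai  (s : symbol) (i : nat) : seq nat := (nth ([::], [::]) s.2 i).2.

Definition lpart (l : seq nat) : nat := head 0 l.

(* s is a k-marked Durfee symbol of n (0-based indices i = paper index - 1) *)
Definition is_kDurfee (k n : nat) (s : symbol) : bool :=
  let D := s.1 in let v := s.2 in
  [&& size v == k,
      all (fun p => is_partition p.1 && is_partition p.2) v,
      sumn [seq sumn p.1 + sumn p.2 | p <- v] + D ^ 2 == n,
      (* (1) and first half of (2): for 1 <= i < k *)
      all (fun i => (alphai s i != [::]) &&
                    all (fun x => x <= lpart (alphai s i)) (betai s i))
          (iota 0 k.-1),
      (* second half of (2): for 2 <= i <= k *)
      all (fun i => all (fun x => lpart (alphai s i.-1) <= x)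
                        (alphai s i ++ betai s i))
          (iota 1 k.-1)
    &
      all (fun x => x <= D) (alphai s k.-1 ++ betai s k.-1)].

(* i-th rank (0-based index i, i.e. rho_{i+1}) *)
Definition rank (k : nat) (s : symbol) (i : nat) : int :=
  if i < k.-1 then (Posz (size (alphai s i)) - Posz (size (betai s i)) - 1)%R
  else (Posz (size (alphai s i)) - Posz (size (betai s i)))%R.

Definition has_ranks (k : nat) (ms : seq int) (s : symbol) : bool :=
  all (fun i => rank k s i == nth (Posz 0) ms i) (iota 0 k).

Definition strict_shifted (a b : seq nat) : bool :=
  (size b < size a) && all (fun j => nth 0 b j < nth 0 a j.+1) (iota 0 (size b)).

Definition is_strict_shifted (k : nat) (s : symbol) : bool :=
  all (fun i => strict_shifted (alphai s i) (betai s i)) (iota 0 k.-1).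

(* Finite candidate enumeration (a superset of all symbols of n). *)
Fixpoint seqs_len (l B : nat) : seq (seq nat) :=
  if l is l'.+1 then [seq x :: t | x <- iota 1 B, t <- seqs_len l' B]
  else [:: [::]].

(* every partition of size <= n has length <= n and parts in 1..n *)
Definition cand_parts (n : nat) : seq (seq nat) :=
  flatten [seq seqs_len l n | l <- iota 0 n.+1].

Fixpoint cand_vecs (k n : nat) : seq (seq (seq nat * seq nat)) :=
  if k is k'.+1 then
    [seq p :: w | p <- [seq (a, b) | a <- cand_parts n, b <- cand_parts n],
                  w <- cand_vecs k' n]
  else [:: [::]].

Definition cand_symbols (k n : nat) : seq symbol :=
  [seq (D, v) | D <- iota 0 n.+1, v <- cand_vecs k n].

Definition Dk (k : nat) (ms : seq int) (n : nat) : nat :=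
  size (undup [seq s <- cand_symbols k n | is_kDurfee k n s && has_ranks k ms s]).

Definition Dss (k : nat) (ms : seq int) (n : nat) : nat :=
  size (undup [seq s <- cand_symbols k n |
                 [&& is_kDurfee k n s, is_strict_shifted k s & has_ranks k ms s]]).

Definition shift_ranks (k : nat) (m t : seq nat) : seq int :=
  mkseq (fun i => if i < k.-1 then Posz (nth 0 m i + 2 * nth 0 t i)
                  else Posz (nth 0 m i)) k.

From mathcomp Require Import all_boot all_order all_algebra zify.
Set Implicit Arguments. Unset Strict Implicit. Unset Printing Implicit Defensive.

(* A vector (alpha, beta) = (a :: A, B) of a marked Durfee symbol is measured at every
   height 1 <= w <= a by #{parts of B >= w} - #{parts of A > w}; its defect is the
   largest of these numbers (or 0), and it is strict shifted iff its defect is 0.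
   Raising moves the last height where the defect is attained from B into A: the defect
   drops by one and the rank grows by two.  Lowering moves the first such height from A
   into B (possible while l(B) < l(A)); it raises the defect by one, and the two moves
   are mutually inverse.  Raising each marked vector of a symbol with ranks m defect-many
   times is thus a bijection onto the strict shifted symbols with ranks m_i + 2 t_i, t_i
   the defect of the i-th vector, whose inverse lowers the i-th vector t_i times.
   Grouping the symbols counted by D_k by their defects (all at most n) proves the
   theorem. *)

Lemma geq_trans : transitive geq.
Proof. by move=> x y z /= hyx hzy; apply: leq_trans hzy hyx. Qed.

Lemma geq_total : total geq.
Proof. by move=> x y; rewrite /= orbC leq_total. Qed.

Lemma geq_anti : antisymmetric geq.
Proof. by move=> x y /andP [/= hyx hxy]; apply/eqP; rewrite eqn_leq hxy hyx. Qed.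

Lemma sorted_head_ge a A : sorted geq (a :: A) -> all (fun x => x <= a) A.
Proof. by rewrite /= path_sortedE; [case/andP | exact: geq_trans]. Qed.

Lemma rem_sort_cons (v : nat) (s : seq nat) : sorted geq s -> rem v (sort geq (v :: s)) = s.
Proof.
move=> hs; apply: (sorted_eq geq_trans geq_anti) => //.
  apply: (subseq_sorted geq_trans (rem_subseq _ _)); exact (path.sort_sorted geq_total _).
by rewrite -(perm_cons v) perm_sym -(perm_sort geq) perm_to_rem // mem_sort mem_head.
Qed.

Lemma sort_cons_rem (v : nat) (s : seq nat) :
  sorted geq s -> v \in s -> sort geq (v :: rem v s) = s.
Proof.
move=> hs hv; apply: (sorted_eq geq_trans geq_anti) => //.
  exact (path.sort_sorted geq_total _).
by rewrite perm_sort perm_sym perm_to_rem.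
Qed.

Lemma count_rem_in (P : pred nat) (v : nat) (s : seq nat) :
  v \in s -> count P s = P v + count P (rem v s).
Proof. by move=> hv; rewrite (permP (perm_to_rem hv)). Qed.

Lemma size_le_sumn (s : seq nat) : all (fun x => 0 < x) s -> size s <= sumn s.
Proof. by elim: s => //= x s IH /andP [hx /IH]; rewrite -add1n; apply: leq_add. Qed.

Lemma sumn_mem (T : eqType) (f : T -> nat) x s : x \in s -> f x <= sumn (map f s).
Proof.
elim: s => // y s IH; rewrite in_cons => /orP [/eqP ->|/IH h] /=; first exact: leq_addr.
exact: leq_trans h (leq_addl _ _).
Qed.

Definition cnt_gt (s : seq nat) (w : nat) : nat := count (fun x => w < x) s.
Definition cnt_ge (s : seq nat) (w : nat) : nat := count (fun x => w <= x) s.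

Lemma cnt_geS s u : cnt_ge s u.+1 = cnt_gt s u.
Proof. by []. Qed.

Lemma cnt_ge_split s w : cnt_ge s w = cnt_gt s w + count_mem w s.
Proof.
elim: s => //= x s; rewrite /cnt_ge /cnt_gt /= => ->.
by case: (ltngtP w x) => [h|h|->]; rewrite ?eqxx ?(gtn_eqF h) ?(ltn_eqF h) /=; lia.
Qed.

Lemma cnt_gt_le s w : all (fun x => x <= w) s -> cnt_gt s w = 0.
Proof.
by move=> h; apply/eqP; rewrite -leqn0 leqNgt -has_count; apply/hasP => -[x /(allP h)]; lia.
Qed.

Lemma cnt_gt_pos s : all (fun x => 0 < x) s -> cnt_gt s 0 = size s.
Proof. by move=> h; apply/eqP; rewrite -all_count. Qed.

Lemma cnt_gt_nth s w j : sorted geq s -> (j < cnt_gt s w) = (w < nth 0 s j).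
Proof.
elim: s j => [|x s IH] j /=; first by rewrite nth_nil.
move=> hs; have hle := sorted_head_ge hs.
case: (ltnP w x) => hwx; first by case: j => [|j] //=; rewrite add1n ltnS IH // (path_sorted hs).
have -> : cnt_gt s w = 0 by apply/cnt_gt_le/allP => y /(allP hle) /= hy; apply: leq_trans hy hwx.
rewrite ltn0; case: j => [|j] /=; first by rewrite ltnNge hwx.
case: (ltnP j (size s)) => hj; last by rewrite nth_default.
by apply/esym/negbTE; rewrite -leqNgt; apply: leq_trans (allP hle _ (mem_nth 0 hj)) hwx.
Qed.

Lemma bigmax_seq_attained (I : eqType) (r : seq I) (F : I -> nat) :
  0 < \max_(i <- r) F i -> exists2 i, i \in r & F i = \max_(i <- r) F i.
Proof.
elim: r => [|x r IH]; first by rewrite big_nil.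
rewrite big_cons; case: (leqP (\max_(i <- r) F i) (F x)) => _.
  by move=> _; exists x; rewrite ?mem_head.
by case/IH=> i ir <-; exists i; rewrite // in_cons ir orbT.
Qed.

Definition first_in (P : pred nat) (s : seq nat) : nat := nth 0 s (find P s).
Definition last_in (P : pred nat) (s : seq nat) : nat := first_in P (rev s).

Lemma first_inP (P : pred nat) lo n : has P (iota lo n) ->
  [/\ first_in P (iota lo n) \in iota lo n, P (first_in P (iota lo n))
    & forall w, lo <= w < first_in P (iota lo n) -> ~~ P w].
Proof.
move=> hP; have hi := hP; rewrite has_find size_iota in hi.
rewrite /first_in nth_iota //; split; first by rewrite mem_iota leq_addr ltn_add2l.
  by rewrite -(nth_iota 0 lo hi) nth_find.
move=> w /andP [hlo hw]; have hj : w - lo < find P (iota lo n) by lia.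
by rewrite -(subnKC hlo) -(nth_iota 0 lo (ltn_trans hj hi)) before_find.
Qed.

Lemma last_inP (P : pred nat) lo n : has P (iota lo n) ->
  [/\ last_in P (iota lo n) \in iota lo n, P (last_in P (iota lo n))
    & forall w, last_in P (iota lo n) < w < lo + n -> ~~ P w].
Proof.
move=> hP; have hi := hP; rewrite -has_rev has_find size_rev size_iota in hi.
have hnth j : j < n -> nth 0 (rev (iota lo n)) j = lo + n - j.+1.
  by move=> hj; rewrite nth_rev size_iota // nth_iota; lia.
rewrite /last_in /first_in hnth //; split; first by rewrite mem_iota; lia.
  by rewrite -hnth // nth_find // has_rev.
move=> w hw; have hj : lo + n - w.+1 < find P (rev (iota lo n)) by lia.
have := before_find 0 hj; rewrite hnth; last lia.
have -> : lo + n - (lo + n - w.+1).+1 = w by lia.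
by move/negbT.
Qed.

(* A vector (alpha, beta) of a Durfee symbol; it is wellformed as the first k-1 vectors
   of a k-marked Durfee symbol are: two partitions, alpha nonempty, beta bounded by
   the largest part of alpha. *)
Notation vec := (seq nat * seq nat)%type.

Definition wf_vec (p : vec) : bool :=
  [&& is_partition p.1, is_partition p.2, p.1 != [::]
    & all (fun x => x <= lpart p.1) p.2].

Lemma wf_vecE a A B : wf_vec (a :: A, B) =
  [&& sorted geq (a :: A), all (fun x => 0 < x) (a :: A), sorted geq B,
      all (fun x => 0 < x) B & all (fun x => x <= a) B].
Proof. by rewrite /wf_vec /is_partition /= !andbA. Qed.

Lemma wf_vec_cons p : wf_vec p -> exists a A B, p = (a :: A, B).
Proof. by case: p => [[|a A] B]; [rewrite /wf_vec /= !andbF | exists a, A, B]. Qed.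

Definition range (p : vec) : seq nat := iota 1 (lpart p.1).
Definition excess (p : vec) (w : nat) : nat := cnt_ge p.2 w - cnt_gt (behead p.1) w.
Definition defect (p : vec) : nat := \max_(w <- range p) excess p w.
Definition tight (p : vec) (w : nat) : bool :=
  cnt_gt (behead p.1) w + defect p == cnt_ge p.2 w.

Lemma defect_bound p w :
  w \in range p -> cnt_ge p.2 w <= cnt_gt (behead p.1) w + defect p.
Proof.
move=> hw; have : excess p w <= defect p := @leq_bigmax_seq _ _ xpredT _ w hw isT.
by rewrite /excess; lia.
Qed.

Lemma slack_lt p w : w \in range p -> ~~ tight p w ->
  cnt_ge p.2 w < cnt_gt (behead p.1) w + defect p.
Proof. by move=> hw; have := defect_bound hw; rewrite /tight; lia. Qed.

Lemma defect_eq p e :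
  (forall w, w \in range p -> cnt_ge p.2 w <= cnt_gt (behead p.1) w + e) ->
  (exists2 w, w \in range p & cnt_gt (behead p.1) w + e = cnt_ge p.2 w) ->
  defect p = e.
Proof.
move=> hle [w hw he]; apply/eqP; rewrite eqn_leq; apply/andP; split.
  by apply/bigmax_leqP_seq => u hu _; have := hle u hu; rewrite /excess; lia.
have : excess p w <= defect p := @leq_bigmax_seq _ _ xpredT _ w hw isT.
by rewrite /excess; lia.
Qed.

Lemma defect0P p :
  reflect (forall w, w \in range p -> cnt_ge p.2 w <= cnt_gt (behead p.1) w) (defect p == 0).
Proof.
rewrite -leqn0; apply: (iffP (bigmax_leqP_seq _ _ _ _)) => h w hw.
  by have := h w hw isT; rewrite /excess; lia.
by have := h w hw; rewrite /excess; lia.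
Qed.

(* Tight heights exist: the defect is attained, and for defect 0 the height a is tight. *)
Lemma has_tight p : wf_vec p -> has (tight p) (range p).
Proof.
move=> wf; have [a [A [B ep]]] := wf_vec_cons wf; subst p.
move: wf; rewrite wf_vecE => /and5P [hsA hpA _ _ hBa].
have hlast : a \in range (a :: A, B).
  by rewrite /range /lpart mem_iota /=; case/andP: hpA; lia.
case: (posnP (defect (a :: A, B))) => hd; last first.
  have [w hw he] : exists2 w, w \in range (a :: A, B) & excess (a :: A, B) w = defect (a :: A, B).
    exact: bigmax_seq_attained.
  apply/hasP; exists w => //; apply/eqP.
  by have := defect_bound hw; move: he hd; rewrite /excess /=; lia.
have hA0 : cnt_gt A a = 0 by apply/cnt_gt_le/sorted_head_ge.
apply/hasP; exists a => //; apply/eqP.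
by have := defect_bound hlast; rewrite /tight hd /= hA0; lia.
Qed.

Lemma defect_le_size p : defect p <= size p.2.
Proof. by apply/bigmax_leqP_seq => w _ _; apply: leq_trans (leq_subr _ _) (count_size _ _). Qed.

Lemma strict_shiftedE p : wf_vec p -> strict_shifted p.1 p.2 = (defect p == 0).
Proof.
move=> wf; have [a [A [B ep]]] := wf_vec_cons wf; subst p.
move: wf; rewrite wf_vecE => /and5P [hsA _ hsB hpB hBa].
have hsA' := path_sorted hsA.
apply/idP/defect0P => /= [/andP [hsz /allP hlt] w|hge].
  rewrite mem_iota => /andP [hw _]; case: w hw => [|u] // _; rewrite cnt_geS.
  case hc: (cnt_gt B u) => [|c] //.
  have hcB : c < size B.
    by apply: leq_trans (count_size (fun x => u < x) B); rewrite -/(cnt_gt B u) hc.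
  have hBc : u < nth 0 B c by rewrite -cnt_gt_nth // hc.
  have := hlt c; rewrite mem_iota hcB => /(_ isT) /= hAc.
  by rewrite cnt_gt_nth //; apply: leq_ltn_trans hBc hAc.
have key j : j < size B -> j < cnt_gt A (nth 0 B j) /\ nth 0 B j < nth 0 A j.
  move=> hj; have hx := mem_nth 0 hj; have := hge (nth 0 B j).
  rewrite /range /lpart mem_iota /= add1n ltnS (allP hpB _ hx) (allP hBa _ hx).
  move=> /(_ isT); case e: (nth 0 B j) (allP hpB _ hx) => [|u] //= _ hle.
  have hju : j < cnt_gt B u by rewrite cnt_gt_nth // e.
  by rewrite -cnt_gt_nth //; split; apply: leq_trans hju hle.
apply/andP; split.
  case: (size B) key => [|s] // key; rewrite ltnS.
  by have [h _] := key s (ltnSn s); apply: leq_trans h (count_size _ _).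
by apply/allP => j; rewrite mem_iota => /andP [_ hj]; have [] := key j hj.
Qed.

Definition raise_pivot (p : vec) : nat := last_in (tight p) (range p).
Definition lower_pivot (p : vec) : nat := first_in (tight p) (range p).

Definition raise (p : vec) : vec :=
  (lpart p.1 :: sort geq (raise_pivot p :: behead p.1), rem (raise_pivot p) p.2).
Definition lower (p : vec) : vec :=
  (lpart p.1 :: rem (lower_pivot p) (behead p.1), sort geq (lower_pivot p :: p.2)).

(* The moves keep the largest part of alpha and the multiset of all parts; this is
   what is needed to stay a Durfee symbol of the same number. *)
Definition same_parts (q p : vec) : bool :=
  (lpart q.1 == lpart p.1) && perm_eq (q.1 ++ q.2) (p.1 ++ p.2).

Lemma same_parts_refl p : same_parts p p.
Proof. by rewrite /same_parts eqxx perm_refl. Qed.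

Lemma same_parts_trans q p r : same_parts q p -> same_parts p r -> same_parts q r.
Proof. by rewrite /same_parts => /andP [/eqP -> hqp] /andP [-> hpr]; apply: perm_trans hqp hpr. Qed.

Section Pivots.
Variables (a : nat) (A B : seq nat).
Hypothesis wf : wf_vec (a :: A, B).

Local Notation p := (a :: A, B).
Let hpA : all (fun x => 0 < x) A.
Proof. by move: wf; rewrite wf_vecE => /and5P [_ /andP []]. Qed.
Let hpB : all (fun x => 0 < x) B. Proof. by move: wf; rewrite wf_vecE => /and5P []. Qed.
Let hBa : all (fun x => x <= a) B. Proof. by move: wf; rewrite wf_vecE => /and5P []. Qed.
Let hAa : all (fun x => x <= a) A.
Proof. by move: wf; rewrite wf_vecE => /and5P [/sorted_head_ge]. Qed.

Lemma range_vec w : (w \in range p) = (0 < w <= a).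
Proof. by rewrite /range /lpart mem_iota /= add1n ltnS. Qed.

Lemma raise_pivotP :
  [/\ 0 < raise_pivot p <= a, tight p (raise_pivot p)
    & forall w, raise_pivot p < w <= a -> ~~ tight p w].
Proof.
have [hin ht hlast] := last_inP (has_tight wf).
by rewrite -range_vec; split=> // w hw; apply: hlast; rewrite /lpart /= add1n ltnS.
Qed.

Lemma lower_pivotP :
  [/\ 0 < lower_pivot p <= a, tight p (lower_pivot p)
    & forall w, 0 < w < lower_pivot p -> ~~ tight p w].
Proof. by have [hin ht hfirst] := first_inP (has_tight wf); rewrite -range_vec; split. Qed.

(* For positive defect the raise pivot is a part of beta: otherwise the excess could
   not drop right above it (or be positive at the top height a). *)
Lemma raise_pivot_mem : 0 < defect p -> raise_pivot p \in B.
Proof.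
move=> hd; have [/andP [_ hva] ht hlast] := raise_pivotP.
set v := raise_pivot p in hva ht hlast *.
apply/negPn/negP => /count_memPn hvB; move: ht; rewrite /tight /= cnt_ge_split hvB addn0.
case: (ltngtP v a) hva => // [hlt|->] _; last by rewrite !cnt_gt_le //; lia.
have hw : v.+1 \in range p by rewrite range_vec.
have hnext : v < v.+1 <= a by rewrite ltnSn.
have := slack_lt hw (hlast _ hnext); rewrite /= cnt_geS.
by have := cnt_ge_split A v.+1; rewrite cnt_geS; lia.
Qed.

Lemma lower_pivot_mem : size B < size A -> lower_pivot p \in A.
Proof.
move=> hsz; have [/andP [hv1 hva] ht hfirst] := lower_pivotP.
set v := lower_pivot p in hv1 hva ht hfirst *.
apply/negPn/negP => /count_memPn hvA; move: ht; rewrite /tight /=.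
case: v hv1 hva hfirst hvA => [|[|u]] // _ hua hfirst hvA.
  have := cnt_ge_split A 1; rewrite cnt_geS (cnt_gt_pos hpA) hvA.
  by have := cnt_gt_pos hpB; rewrite -cnt_geS; lia.
have hw : u.+1 \in range p by rewrite range_vec; lia.
have := slack_lt hw (hfirst u.+1 (ltnSn _)); rewrite /= -(cnt_geS A) (cnt_ge_split A) hvA.
by have := cnt_ge_split B u.+1; rewrite -(cnt_geS B u.+1); lia.
Qed.
End Pivots.

Section Raise.
Variables (a : nat) (A B : seq nat).
Hypotheses (wf : wf_vec (a :: A, B)) (hd : 0 < defect (a :: A, B)).

Local Notation p := (a :: A, B).
Local Notation v := (raise_pivot (a :: A, B)).
Local Notation d := (defect (a :: A, B)).

Let hvB : v \in B. Proof. exact: raise_pivot_mem. Qed.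
Let hsA : sorted geq A. Proof. by move: wf; rewrite wf_vecE => /and5P [/path_sorted]. Qed.
Let hsB : sorted geq B. Proof. by move: wf; rewrite wf_vecE => /and5P []. Qed.

Lemma raiseE : raise p = (a :: sort geq (v :: A), rem v B).
Proof. by []. Qed.

Lemma raise_counts w :
  cnt_gt (sort geq (v :: A)) w = (w < v) + cnt_gt A w /\
  cnt_ge B w = (w <= v) + cnt_ge (rem v B) w.
Proof. by split; rewrite ?/cnt_gt ?count_sort // /cnt_ge (count_rem_in _ hvB). Qed.

Lemma wf_raise : wf_vec (raise p).
Proof.
have [/andP [hv0 hva] _ _] := raise_pivotP wf.
move: wf; rewrite raiseE !wf_vecE => /and5P [hsA' hpA _ hpB hBa].
move: hpA => /= /andP [ha hpA]; apply/and5P; split=> /=.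
- rewrite path_sortedE; last exact: geq_trans.
  rewrite all_sort /= hva (sorted_head_ge hsA'); exact (path.sort_sorted geq_total _).
- by rewrite ha all_sort /= hv0.
- apply: (subseq_sorted geq_trans (rem_subseq _ _)); exact hsB.
- by apply/allP => x /mem_rem /(allP hpB).
- by apply/allP => x /mem_rem /(allP hBa).
Qed.

Lemma shape_raise :
  [/\ same_parts (raise p) p, size (raise p).1 = (size p.1).+1
    & (size (raise p).2).+1 = size p.2].
Proof.
split; rewrite /= ?size_sort ?(perm_size (perm_to_rem hvB)) //.
apply/andP; split=> //=; apply/permP => P.
by rewrite /= !count_cat count_sort /= (count_rem_in _ hvB); lia.
Qed.

(* Raising keeps the pivot tight, makes the heights below it slack by one and those above
   it (already slack) tighter by one: the defect drops by one. *)
Lemma defect_raise : defect (raise p) = d.-1.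
Proof.
have [hv ht hlast] := raise_pivotP wf.
rewrite raiseE; apply: defect_eq => /= [w|]; last first.
  exists v; first by rewrite range_vec.
  by have [c1 c2] := raise_counts v; move: ht c1 c2; rewrite /tight ltnn leqnn /=; lia.
rewrite range_vec => hw; have hwp : w \in range p by rewrite range_vec.
have hb := defect_bound hwp; have [c1 c2] := raise_counts w; rewrite /= in hb.
case: (ltngtP w v) => h.
- by move: c1 c2; rewrite h (ltnW h) /=; lia.
- have hw' : v < w <= a by rewrite h; case/andP: hw.
  have := slack_lt hwp (hlast w hw'); move: c1 c2; rewrite ltnNge (ltnW h) leqNgt h /=; lia.
- by move: ht c1 c2; rewrite /tight h ltnn leqnn /=; lia.
Qed.

Lemma lower_pivot_raise : lower_pivot (raise p) = v.
Proof.
have wfr : wf_vec (a :: sort geq (v :: A), rem v B) := wf_raise.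
have dr := defect_raise; rewrite raiseE in dr *.
have [/andP [hx0 hxa] htx hmin] := lower_pivotP wfr.
have [/andP [hv0 hva] ht _] := raise_pivotP wf.
have htv : tight (a :: sort geq (v :: A), rem v B) v.
  by have [c1 c2] := raise_counts v; move: ht c1 c2; rewrite /tight dr ltnn leqnn /=; lia.
set x := lower_pivot _ in hx0 hxa htx hmin *.
case: (ltngtP x v) => // h; last by have := hmin v; rewrite hv0 h htv => /(_ isT).
have hxp : x \in range p by rewrite range_vec hx0.
have [c1 c2] := raise_counts x.
by have := defect_bound hxp; move: htx c1 c2; rewrite /tight dr h (ltnW h) /=; lia.
Qed.

Lemma lower_raise : lower (raise p) = p.
Proof. by rewrite /lower lower_pivot_raise raiseE /= rem_sort_cons ?sort_cons_rem. Qed.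
End Raise.

Section Lower.
Variables (a : nat) (A B : seq nat).
Hypotheses (wf : wf_vec (a :: A, B)) (hsz : size B < size A).

Local Notation p := (a :: A, B).
Local Notation v := (lower_pivot (a :: A, B)).
Local Notation d := (defect (a :: A, B)).

Let hvA : v \in A. Proof. exact: lower_pivot_mem. Qed.
Let hsA : sorted geq A. Proof. by move: wf; rewrite wf_vecE => /and5P [/path_sorted]. Qed.
Let hsB : sorted geq B. Proof. by move: wf; rewrite wf_vecE => /and5P []. Qed.

Lemma lowerE : lower p = (a :: rem v A, sort geq (v :: B)).
Proof. by []. Qed.

Lemma lower_counts w :
  cnt_gt A w = (w < v) + cnt_gt (rem v A) w /\
  cnt_ge (sort geq (v :: B)) w = (w <= v) + cnt_ge B w.
Proof. by split; rewrite ?/cnt_ge ?count_sort // /cnt_gt (count_rem_in _ hvA). Qed.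

Lemma wf_lower : wf_vec (lower p).
Proof.
have [/andP [hv0 hva] _ _] := lower_pivotP wf.
move: wf; rewrite lowerE !wf_vecE => /and5P [hsA' hpA _ hpB hBa].
move: hpA => /= /andP [ha hpA]; apply/and5P; split=> /=.
- rewrite path_sortedE; last exact: geq_trans.
  apply/andP; split; first by apply/allP => x /mem_rem /(allP (sorted_head_ge hsA')).
  apply: (subseq_sorted geq_trans (rem_subseq _ _)); exact hsA.
- by rewrite ha; apply/allP => x /mem_rem /(allP hpA).
- exact (path.sort_sorted geq_total _).
- by rewrite all_sort /= hv0.
- by rewrite all_sort /= hva.
Qed.

Lemma shape_lower :
  [/\ same_parts (lower p) p, (size (lower p).1).+1 = size p.1
    & size (lower p).2 = (size p.2).+1].
Proof.
split; rewrite /= ?size_sort ?(perm_size (perm_to_rem hvA)) //.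
apply/andP; split=> //=; apply/permP => P.
by rewrite /= !count_cat count_sort /= (count_rem_in _ hvA); lia.
Qed.

(* Lowering keeps the pivot tight and makes every other height slack: the defect grows
   by one. *)
Lemma defect_lower : defect (lower p) = d.+1.
Proof.
have [hv ht hmin] := lower_pivotP wf.
rewrite lowerE; apply: defect_eq => /= [w|]; last first.
  exists v; first by rewrite range_vec.
  by have [c1 c2] := lower_counts v; move: ht c1 c2; rewrite /tight ltnn leqnn /=; lia.
rewrite range_vec => hw; have hwp : w \in range p by rewrite range_vec.
have hb := defect_bound hwp; have [c1 c2] := lower_counts w; rewrite /= in hb.
case: (ltngtP w v) => h.
- have hw' : 0 < w < v by rewrite h andbT; case/andP: hw.
  have := slack_lt hwp (hmin w hw'); move: c1 c2; rewrite h (ltnW h) /=; lia.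
- by move: c1 c2; rewrite ltnNge (ltnW h) leqNgt h /=; lia.
- by move: ht c1 c2; rewrite /tight h ltnn leqnn /=; lia.
Qed.

Lemma raise_pivot_lower : raise_pivot (lower p) = v.
Proof.
have wfl : wf_vec (a :: rem v A, sort geq (v :: B)) := wf_lower.
have dl := defect_lower; rewrite lowerE in dl *.
have [/andP [hx0 hxa] htx hlast] := raise_pivotP wfl.
have [/andP [hv0 hva] ht _] := lower_pivotP wf.
have htv : tight (a :: rem v A, sort geq (v :: B)) v.
  by have [c1 c2] := lower_counts v; move: ht c1 c2; rewrite /tight dl ltnn leqnn /=; lia.
set x := raise_pivot _ in hx0 hxa htx hlast *.
case: (ltngtP x v) => // h; first by have := hlast v; rewrite hva h htv => /(_ isT).
have hxp : x \in range p by rewrite range_vec hx0.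
have [c1 c2] := lower_counts x.
by have := defect_bound hxp; move: htx c1 c2; rewrite /tight dl ltnNge (ltnW h) leqNgt h /=; lia.
Qed.

Lemma raise_lower : raise (lower p) = p.
Proof. by rewrite /raise raise_pivot_lower lowerE /= sort_cons_rem ?rem_sort_cons. Qed.
End Lower.

Lemma iter_raise p j : wf_vec p -> j <= defect p ->
  [/\ wf_vec (iter j raise p), defect (iter j raise p) = defect p - j,
      same_parts (iter j raise p) p, size (iter j raise p).1 = size p.1 + j
    & size (iter j raise p).2 + j = size p.2].
Proof.
move=> wf; elim: j => [|j IH] hj; first by rewrite subn0 !addn0; split=> //; exact: same_parts_refl.
have [wq dq sq zq1 zq2] := IH (ltnW hj); rewrite iterS.
have [a [A [B eq]]] := wf_vec_cons wq; rewrite eq in wq dq sq zq1 zq2 *.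
have hd : 0 < defect (a :: A, B) by rewrite dq subn_gt0.
have [sr zr1 zr2] := shape_raise wq hd.
split; [exact: wf_raise | rewrite defect_raise // dq; lia | | lia | lia].
exact: same_parts_trans sr sq.
Qed.

Lemma lower_iter_raise p j : wf_vec p -> j <= defect p -> iter j lower (iter j raise p) = p.
Proof.
move=> wf; elim: j => [|j IH] hj //; rewrite iterSr iterS.
have [wq dq _ _ _] := iter_raise wf (ltnW hj).
have [a [A [B eq]]] := wf_vec_cons wq; rewrite eq in wq dq *.
by rewrite lower_raise ?dq ?subn_gt0 // -eq IH // ltnW.
Qed.

Lemma iter_lower q t : wf_vec q -> size q.2 + 2 * t <= size q.1 ->
  [/\ wf_vec (iter t lower q), defect (iter t lower q) = defect q + t,
      same_parts (iter t lower q) q, size (iter t lower q).1 + t = size q.1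
    & size (iter t lower q).2 = size q.2 + t].
Proof.
move=> wf; elim: t => [|t IH] ht; first by rewrite !addn0; split=> //; exact: same_parts_refl.
have ht' : size q.2 + 2 * t <= size q.1 by lia.
have [wq dq sq zq1 zq2] := IH ht'; rewrite iterS.
have [a [A [B eq]]] := wf_vec_cons wq; rewrite eq in wq dq sq zq1 zq2 *.
have hsz : size B < size A by move: zq1 zq2 ht => /=; lia.
have [sl zl1 zl2] := shape_lower wq hsz.
split; [exact: wf_lower | rewrite defect_lower // dq; lia | | lia | lia].
exact: same_parts_trans sl sq.
Qed.

Lemma raise_iter_lower q t : wf_vec q -> size q.2 + 2 * t <= size q.1 ->
  iter t raise (iter t lower q) = q.
Proof.
move=> wf; elim: t => [|t IH] ht //; rewrite iterSr iterS.
have ht' : size q.2 + 2 * t <= size q.1 by lia.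
have [wq _ _ zq1 zq2] := iter_lower wf ht'.
have [a [A [B eq]]] := wf_vec_cons wq; rewrite eq in wq zq1 zq2 *.
have hsz : size B < size A by move: zq1 zq2 ht => /=; lia.
by rewrite raise_lower // -eq IH.
Qed.

Local Notation dvec := (([::], [::]) : vec).

Definition map_marked (k : nat) (f : nat -> vec -> vec) (s : symbol) : symbol :=
  (s.1, [seq if i < k.-1 then f i (nth dvec s.2 i) else nth dvec s.2 i | i <- iota 0 k]).

Lemma nth_map_marked k f s i : i < k ->
  nth dvec (map_marked k f s).2 i = if i < k.-1 then f i (nth dvec s.2 i) else nth dvec s.2 i.
Proof. by move=> hi; rewrite (nth_map 0) ?size_iota // nth_iota. Qed.

Lemma Durfee_wf k n s i : is_kDurfee k n s -> i < k.-1 -> wf_vec (nth dvec s.2 i).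
Proof.
case/andP => /eqP hsz /and5P [hpart _ hvec _ _] hi.
have hik : i < size s.2 by rewrite hsz; apply: leq_trans hi (leq_pred k).
have := allP hvec i; rewrite mem_iota hi => /(_ isT) /andP [hne hb].
by have := allP hpart _ (mem_nth dvec hik) => /andP [h1 h2]; rewrite /wf_vec h1 h2 hne hb.
Qed.

Lemma Durfee_map k n f s : 0 < k -> is_kDurfee k n s ->
  (forall i, i < k.-1 ->
     wf_vec (f i (nth dvec s.2 i)) && same_parts (f i (nth dvec s.2 i)) (nth dvec s.2 i)) ->
  is_kDurfee k n (map_marked k f s).
Proof.
move=> hk hD hf; have hD' := hD; case/andP: hD' => /eqP hsz /and5P [hpart hsum h1 h2 h3].
set s' := map_marked k f s.
have hs' : size s'.2 = k by rewrite size_map size_iota.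
have hnth i : i < k -> nth dvec s'.2 i = if i < k.-1 then f i (nth dvec s.2 i) else nth dvec s.2 i.
  exact: nth_map_marked.
have hlast : nth dvec s'.2 k.-1 = nth dvec s.2 k.-1 by rewrite hnth ?ltnn // prednK.
have hsame i : i < k -> same_parts (nth dvec s'.2 i) (nth dvec s.2 i).
  move=> hik; rewrite hnth //; case: ifP => hi; first by case/andP: (hf i hi).
  exact: same_parts_refl.
have hperm i : i < k -> perm_eq ((nth dvec s'.2 i).1 ++ (nth dvec s'.2 i).2)
                                ((nth dvec s.2 i).1 ++ (nth dvec s.2 i).2).
  by move=> hik; case/andP: (hsame i hik).
apply/andP; split; first by rewrite hs'.
apply/and5P; split.
- apply/allP => x /(nthP dvec) [i hik <-]; have {}hik : i < k by rewrite -hs'.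
  rewrite hnth //; case: ifP => hi; first by case/andP: (hf i hi) => /and4P [-> -> _ _].
  by apply: (allP hpart); apply: mem_nth; rewrite hsz.
- rewrite -(eqP hsum); apply/eqP; congr (sumn _ + _).
  apply: (@eq_from_nth _ 0); rewrite !size_map size_iota ?hsz // => i hik.
  have hi' : i < size s'.2 by rewrite hs'.
  have hi : i < size s.2 by rewrite hsz.
  rewrite (nth_map dvec _ _ hi') (nth_map dvec _ _ hi) /= -!sumn_cat.
  by apply: perm_sumn; apply: hperm.
- apply/allP => i; rewrite mem_iota add0n => /andP [_ hik] /=.
  rewrite /alphai /betai hnth ?hik /=; last exact: leq_trans hik (leq_pred k).
  by case/andP: (hf i hik) => /and4P [_ _ -> ->].
- apply/allP => i; rewrite mem_iota add1n => /andP [hi1 hik] /=.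
  have hik' : i < k by rewrite -(prednK hk).
  have hi1' : i.-1 < k.-1 by rewrite -ltnS prednK.
  have := allP h2 i; rewrite mem_iota add1n hi1 hik => /(_ isT).
  rewrite /alphai /betai (perm_all _ (hperm i hik')).
  by case/andP: (hsame _ (leq_trans hi1' (leq_pred k))) => /eqP ->.
- by move: h3; rewrite /alphai /betai hlast /=.
Qed.

Definition ranks_ok (k : nat) (m t : seq nat) (s : symbol) : bool :=
  all (fun i => if i < k.-1
                then size (alphai s i) == size (betai s i) + (nth 0 m i + 2 * nth 0 t i) + 1
                else rank k s i == Posz (nth 0 m i)) (iota 0 k).

Lemma has_shift_ranksE k m t s : size m = k ->
  has_ranks k (shift_ranks k m t) s = ranks_ok k m t s.
Proof.
move=> hm; apply: eq_in_all => i; rewrite mem_iota add0n => /andP [_ hi].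
rewrite /shift_ranks nth_mkseq // /rank; case: ifP => // _.
by apply/eqP/eqP; lia.
Qed.

Lemma shift_ranks0 k m : size m = k -> shift_ranks k m [::] = [seq Posz x | x <- m].
Proof.
move=> hm; apply: (@eq_from_nth _ (Posz 0)) => [|i].
  by rewrite /shift_ranks size_mkseq size_map.
rewrite /shift_ranks size_mkseq => hi.
by rewrite nth_mkseq // (nth_map 0) ?hm // nth_nil muln0 addn0; case: ifP.
Qed.

Definition defects (k : nat) (s : symbol) : seq nat :=
  [seq defect (nth dvec s.2 i) | i <- iota 0 k.-1].

Definition reduce_sym (k : nat) : symbol -> symbol :=
  map_marked k (fun _ p => iter (defect p) raise p).
Definition expand_sym (k : nat) (t : seq nat) : symbol -> symbol :=
  map_marked k (fun i p => iter (nth 0 t i) lower p).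

Lemma size_defects k s : size (defects k s) = k.-1.
Proof. by rewrite size_map size_iota. Qed.

Lemma nth_defects k s i : i < k.-1 -> nth 0 (defects k s) i = defect (nth dvec s.2 i).
Proof. by move=> hi; rewrite (nth_map 0) ?size_iota // nth_iota. Qed.

Lemma defects_bound k n s : is_kDurfee k n s -> all (fun x => x <= n) (defects k s).
Proof.
move=> hD; apply/allP => x /mapP [i]; rewrite mem_iota add0n => /andP [_ hi] ->.
apply: leq_trans (defect_le_size _) _; case/andP: hD => /eqP hsz /and3P [hpart /eqP hsum _].
have hin : nth dvec s.2 i \in s.2 by rewrite mem_nth // hsz; apply: leq_trans hi (leq_pred k).
have /andP [_ /andP [_ hpos]] := allP hpart _ hin.
apply: leq_trans (size_le_sumn hpos) _; rewrite -hsum; apply: leq_trans (leq_addr _ _).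
by apply: leq_trans (sumn_mem (fun p => sumn p.1 + sumn p.2) hin); apply: leq_addl.
Qed.

Lemma reduce_sym_spec k n m s : 0 < k -> size m = k -> is_kDurfee k n s -> ranks_ok k m [::] s ->
  [/\ is_kDurfee k n (reduce_sym k s), is_strict_shifted k (reduce_sym k s),
      ranks_ok k m (defects k s) (reduce_sym k s)
    & expand_sym k (defects k s) (reduce_sym k s) = s].
Proof.
case: s => D v hk hm hD hr; have hsz : size v = k by case/andP: hD => /eqP.
have hik i : i < k.-1 -> i < k by move=> hi; apply: leq_trans hi (leq_pred k).
pose r i := iter (defect (nth dvec v i)) raise (nth dvec v i).
have hred i : i < k.-1 -> [/\ wf_vec (r i), defect (r i) = 0, same_parts (r i) (nth dvec v i),
    size (r i).1 = size (nth dvec v i).1 + defect (nth dvec v i)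
  & size (r i).2 + defect (nth dvec v i) = size (nth dvec v i).2].
  by move=> hi; have := iter_raise (Durfee_wf hD hi) (leqnn _); rewrite subnn.
have hnth i : i < k ->
    nth dvec (reduce_sym k (D, v)).2 i = if i < k.-1 then r i else nth dvec v i.
  exact: nth_map_marked.
split.
- by apply: Durfee_map => // i hi; case: (hred i hi) => -> _ -> _ _.
- apply/allP => i; rewrite mem_iota add0n => /andP [_ hi].
  rewrite /alphai /betai hnth ?hik // hi; have [wr dr _ _ _] := hred i hi.
  by rewrite (strict_shiftedE wr) dr.
- apply/allP => i hi; have := allP hr i hi; move: hi; rewrite mem_iota add0n => /andP [_ hi].
  rewrite /rank /alphai /betai hnth //; case: ifP => hi'; last by rewrite hi'.
  rewrite nth_nil nth_defects //=; have [_ _ _ z1 z2] := hred i hi'.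
  by move/eqP=> e; apply/eqP; lia.
rewrite /expand_sym /map_marked /=; congr (_, _).
apply: (@eq_from_nth _ dvec) => [|i]; rewrite size_map size_iota ?hsz // => hi.
rewrite (nth_map 0) ?size_iota // nth_iota // add0n hnth //; case: ifP => hi'; rewrite hi' //.
by rewrite nth_defects // lower_iter_raise // (Durfee_wf hD hi').
Qed.

Lemma expand_sym_spec k n m t y : 0 < k -> size m = k -> size t = k.-1 ->
  is_kDurfee k n y -> is_strict_shifted k y -> ranks_ok k m t y ->
  [/\ is_kDurfee k n (expand_sym k t y), ranks_ok k m [::] (expand_sym k t y),
      defects k (expand_sym k t y) = t & reduce_sym k (expand_sym k t y) = y].
Proof.
case: y => D v hk hm ht hD hss hr; have hsz : size v = k by case/andP: hD => /eqP.
have hik i : i < k.-1 -> i < k by move=> hi; apply: leq_trans hi (leq_pred k).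
pose l i := iter (nth 0 t i) lower (nth dvec v i).
have hlong i : i < k.-1 -> size (nth dvec v i).2 + 2 * nth 0 t i <= size (nth dvec v i).1.
  move=> hi; have := allP hr i; rewrite mem_iota add0n (hik i hi) hi /alphai /betai.
  by move=> /(_ isT) /eqP /=; lia.
have hd0 i : i < k.-1 -> defect (nth dvec v i) = 0.
  move=> hi; apply/eqP; rewrite -strict_shiftedE ?(Durfee_wf hD hi) //.
  by have := allP hss i; rewrite mem_iota add0n hi; apply.
have hexp i : i < k.-1 -> [/\ wf_vec (l i), defect (l i) = nth 0 t i,
    same_parts (l i) (nth dvec v i), size (l i).1 + nth 0 t i = size (nth dvec v i).1
  & size (l i).2 = size (nth dvec v i).2 + nth 0 t i].
  by move=> hi; have := iter_lower (Durfee_wf hD hi) (hlong i hi); rewrite hd0 // add0n.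
have hnth i : i < k ->
    nth dvec (expand_sym k t (D, v)).2 i = if i < k.-1 then l i else nth dvec v i.
  exact: nth_map_marked.
split.
- by apply: Durfee_map => // i hi; case: (hexp i hi) => -> _ -> _ _.
- apply/allP => i hi; have := allP hr i hi; move: hi; rewrite mem_iota add0n => /andP [_ hi].
  rewrite /rank /alphai /betai hnth //; case: ifP => hi'; last by rewrite hi'.
  rewrite nth_nil /=; have [_ _ _ z1 z2] := hexp i hi'.
  by move/eqP=> e; apply/eqP; lia.
- apply: (@eq_from_nth _ 0) => [|i]; rewrite size_defects ?ht // => hi.
  by rewrite nth_defects // hnth ?hik // hi; case: (hexp i hi).
rewrite /reduce_sym /map_marked /=; congr (_, _).
apply: (@eq_from_nth _ dvec) => [|i]; rewrite size_map size_iota ?hsz // => hi.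
rewrite (nth_map 0) ?size_iota // nth_iota // add0n hnth //; case: ifP => hi'; rewrite hi' //.
by case: (hexp i hi') => _ -> _ _ _; rewrite raise_iter_lower ?(Durfee_wf hD hi') ?hlong.
Qed.

Lemma seqs_len_mem (l : seq nat) n : all (fun x => 0 < x <= n) l -> l \in seqs_len (size l) n.
Proof.
elim: l => //= x l IH /andP [hx hl].
by apply: (allpairs_f (fun x t => x :: t)); [rewrite mem_iota add1n ltnS | exact: IH].
Qed.

Lemma cand_parts_mem l n : is_partition l -> sumn l <= n -> l \in cand_parts n.
Proof.
case/andP=> _ hp hs; apply/flattenP; exists (seqs_len (size l) n).
  by apply/mapP; exists (size l); rewrite // mem_iota ltnS; apply: leq_trans (size_le_sumn hp) hs.
apply: seqs_len_mem; apply/allP => x hx; rewrite (allP hp x hx) /=.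
by apply: leq_trans hs; have := sumn_mem id hx; rewrite map_id.
Qed.

Lemma cand_vecs_mem k n v : size v = k ->
  all (fun p => (p.1 \in cand_parts n) && (p.2 \in cand_parts n)) v -> v \in cand_vecs k n.
Proof.
elim: v k => [|p v IH] [|k] // [hk] /andP [hp hv].
apply: (allpairs_f (fun p w => p :: w)); last exact: IH.
by case: p hp => a b /andP [ha hb]; apply: (allpairs_f (fun a b => (a, b))).
Qed.

Lemma Durfee_cand k n s : is_kDurfee k n s -> s \in cand_symbols k n.
Proof.
case: s => D v /andP [/eqP hsz /and5P [hpart /eqP hsum _ _ _]].
apply: (allpairs_f (fun D v => (D, v))).
  rewrite mem_iota ltnS -hsum; apply: leq_trans (leq_addl _ _).
  by case: (D) => // d; rewrite expnS expn1 leq_pmull.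
apply: cand_vecs_mem => //; apply/allP => p hp; have /andP [h1 h2] := allP hpart p hp.
have hs : sumn p.1 + sumn p.2 <= n.
  by rewrite -hsum; exact: leq_trans (sumn_mem (fun p => sumn p.1 + sumn p.2) hp) (leq_addr _ _).
by rewrite !cand_parts_mem //; apply: leq_trans hs; rewrite ?leq_addr ?leq_addl.
Qed.

Lemma count_bij (T : eqType) (U : seq T) (P Q : pred T) (g h : T -> T) :
  {subset P <= U} -> {subset Q <= U} ->
  (forall x, P x -> Q (g x) /\ h (g x) = x) -> (forall y, Q y -> P (h y) /\ g (h y) = y) ->
  size (undup (filter P U)) = size (undup (filter Q U)).
Proof.
move=> cP cQ hPQ hQP.
have memP x : (x \in undup (filter P U)) = P x.
  by rewrite mem_undup mem_filter andb_idr //; exact: cP.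
have memQ y : (y \in undup (filter Q U)) = Q y.
  by rewrite mem_undup mem_filter andb_idr //; exact: cQ.
rewrite -(size_map g); apply: perm_size; apply: uniq_perm; last 1 first.
- move=> z; rewrite memQ; apply/mapP/idP => [[x hx ->]|hz].
    by rewrite memP in hx; case: (hPQ x hx).
  by case: (hQP z hz) => h1 h2; exists (h z); rewrite ?memP.
- rewrite map_inj_in_uniq ?undup_uniq // => x y; rewrite !memP => hx hy e.
  by rewrite -(proj2 (hPQ x hx)) e (proj2 (hPQ y hy)).
- exact: undup_uniq.
Qed.

Lemma size_by_key (T : Type) (I : finType) (key : T -> I) (l : seq T) :
  size l = \sum_(t : I) count (fun x => key x == t) l.
Proof.
elim: l => [|x l IH] /=; first by rewrite big1.
rewrite big_split /= -IH -add1n; congr (_ + _).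
rewrite (eq_bigr (fun t => if t == key x then 1 else 0)) => [|t _].
  by rewrite -big_mkcond big_pred1_eq.
by rewrite eq_sym; case: eqP.
Qed.

(* The defects of a symbol, as a tuple of numbers below B + 1; for symbols of n with
   n <= B this tuple determines the defects. *)
Definition defects_key (k B : nat) (s : symbol) : (k.-1).-tuple 'I_B.+1 :=
  [tuple (inord (nth 0 (defects k s) i) : 'I_B.+1) | i < k.-1].

Lemma defects_keyE k B s (t : (k.-1).-tuple 'I_B.+1) :
  all (fun x => x <= B) (defects k s) ->
  (defects_key k B s == t) = (defects k s == [seq val x | x <- t]).
Proof.
move=> hb; apply/eqP/eqP => [<-|e].
  apply: (@eq_from_nth _ 0) => [|i]; first by rewrite size_defects size_map size_tuple.
  rewrite size_defects => hi.
  rewrite (nth_map ord0) ?size_tuple // -(tnth_nth ord0 _ (Ordinal hi)) tnth_mktuple /=.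
  by rewrite inordK // ltnS; apply: (allP hb); apply: mem_nth; rewrite size_defects.
apply: eq_from_tnth => i; rewrite tnth_mktuple e (nth_map ord0) ?size_tuple //.
by apply: val_inj; rewrite /= inordK -?tnth_nth // ltn_ord.
Qed.

Theorem mainTheorem8 (k n : nat) (m : seq nat) :
  2 <= k -> size m = k ->
  exists B0 : nat, forall B : nat, B0 <= B ->
    Dk k [seq Posz x | x <- m] n =
    (\sum_(t : (k.-1).-tuple 'I_B) Dss k (shift_ranks k m [seq val x | x <- t]) n)%N.
Proof.
move=> hk hm; exists n.+1 => -[//|B] hB; have hk0 : 0 < k by apply: leq_trans hk.
rewrite /Dk [LHS](size_by_key (defects_key k B)); apply: eq_bigr => t _.
rewrite -size_filter filter_undup -filter_predI /Dss -(shift_ranks0 hm).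
have hbound s : is_kDurfee k n s -> all (fun x => x <= B) (defects k s).
  by move/defects_bound => hb; apply/allP => x /(allP hb); lia.
have ht : size [seq val x | x <- t] = k.-1 by rewrite size_map size_tuple.
apply: (count_bij (g := reduce_sym k) (h := expand_sym k [seq val x | x <- t])).
- by move=> x /andP [_ /andP [/Durfee_cand]].
- by move=> y /and3P [/Durfee_cand].
- move=> x /andP [hkey /andP [hD hr]]; rewrite has_shift_ranksE // in hr.
  rewrite defects_keyE ?hbound // in hkey; rewrite -(eqP hkey).
  have [h1 h2 h3 h4] := reduce_sym_spec hk0 hm hD hr.
  by rewrite /= has_shift_ranksE // h1 h2 h3.
- move=> y /and3P [hD hss hr]; rewrite has_shift_ranksE // in hr.
  have [h1 h2 h3 h4] := expand_sym_spec hk0 hm ht hD hss hr.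
  by rewrite /= defects_keyE ?hbound // h3 eqxx h1 has_shift_ranksE.
Qed.
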